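(* Let $\Gamma$ be a finite Abelian group (written additively, identity $0$) and let $R, B$ be disjoint inverse-closed subsets of $\Gamma$ not containing $0$. Let $G = \mathrm{Cay}(\Gamma, B)$ have all edges coloured $1$ and $H = \mathrm{Cay}(\Gamma, R)$ have all edges coloured $2$, and colour $\mathrm{Cay}(\Gamma, B \cup R)$ by giving each edge the colour it has in $G$ or in $H$. Then in $\mathrm{Cay}(\Gamma, B \cup R)$, for every $v \in \Gamma$: (i) $\deg_1(v) = \deg^G(v)$ and $\deg_2(v) = \deg^H(v)$; (ii) $e_1[v] - e_2[v] = \left(e_1^G[v] - e_2^H[v]\right) + \left(e_2^H(N^G[v]) - e_1^G(N^H[v])\right)$; (iii) if moreover $(R + B) \cap R = \emptyset$ and $e_1^G[v] > e_2^H[v]$, then $e_1[v] > e_2[v]$.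
   Context: For a group $\Gamma$ and an inverse-closed subset $S$ not containing the identity, the Cayley graph $\mathrm{Cay}(\Gamma,S)$ has vertex set $\Gamma$ and edges $\{g,g+s\}$ for $g\in\Gamma$, $s\in S$. $R+B=\{r+b: r\in R, b\in B\}$. For an edge-coloured graph $X$, a set $S$ of vertices and a colour $j$, $e^X_j(S)$ is the number of edges coloured $j$ in the subgraph of $X$ induced by $S$; $N^X[v]$ is the closed neighbourhood of $v$ in $X$; $e^X_j[v]=e^X_j(N^X[v])$; $\deg_j(v)$ is the number of edges of colour $j$ at $v$. Quantities without superscript refer to $\mathrm{Cay}(\Gamma,B\cup R)$. *)

From HB Require Import structures.
From mathcomp Require Import all_boot all_order all_algebra.
Set Implicit Arguments. Unset Strict Implicit. Unset Printing Implicit Defensive.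
Import GRing.Theory.
Local Open Scope ring_scope.

(* An edge-coloured simple graph on a finite vertex type: an adjacency
   relation together with a colouring of (ordered pairs of) vertices; only
   the colours of adjacent pairs are meaningful. *)
Record cgraph (T : finType) := CGraph { cadj : rel T; ccol : T -> T -> nat }.

Section Graphs.
Variable T : finType.
Implicit Types (X : cgraph T) (S : {set T}) (v : T) (j : nat).

Definition cnbhd X v : {set T} := v |: [set w | cadj X v w].

Definition deg X v : nat := #|[set w | cadj X v w]|.

Definition degc X j v : nat := #|[set w | cadj X v w && (ccol X v w == j)]|.

Definition ecol X j S : nat :=
  #|[set E : {set T} | (E \subset S) &&
      [exists x, exists y, [&& x != y, cadj X x y, ccol X x y == j &
                               E == [set x; y]]]]|.

Definition ecolv X j v : nat := ecol X j (cnbhd X v).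
End Graphs.

Section Cayley.
Variable G : finZmodType.
Implicit Types (S B R : {set G}).

Definition inv_closed S := forall x, x \in S -> - x \in S.

Definition cay_col S (j : nat) : cgraph G :=
  CGraph (fun x y => y - x \in S) (fun _ _ => j).

Definition cay_union B R : cgraph G :=
  CGraph (fun x y => y - x \in B :|: R)
         (fun x y => if y - x \in B then 1%N else 2%N).

Definition sumset (R B : {set G}) : {set G} :=
  [set r + b | r in R, b in B].
End Cayley.

From HB Require Import structures.
From mathcomp Require Import all_boot all_order all_algebra zify.
Import GRing.Theory Num.Theory.
Local Open Scope ring_scope.

(* Write A = v + B and C = v + R, so that N[v] = {v} u A u C.  The map
   (x, y) |-> (2v - x, v + y - x) sends the B-edges between A and C, oriented
   from A to C, bijectively onto the R-edges inside A taken with both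
   orientations; so e_B(A, C) = 2 e_R(A) and symmetrically e_R(A, C) = 2 e_B(C).
   Since v has no B-neighbour in C and no R-neighbour in A, this gives
     e_1[v] = e_1^G[v] + e_1^G(N^H[v]) + 2 e_2^H(N^G[v]),
     e_2[v] = e_2^H[v] + e_2^H(N^G[v]) + 2 e_1^G(N^H[v]),
   and (ii) is their difference.  If (R + B) n R is empty, no B-edge lies
   inside C, so e_1^G(N^H[v]) = 0 and (iii) follows from the first identity. *)

Lemma set2_eq (T : finType) (a b x y : T) : a != b ->
  ([set a; b] == [set x; y]) = ((a, b) == (x, y)) || ((a, b) == (y, x)).
Proof.
move=> ab; apply/eqP/idP => [Eab | /orP[] /eqP[-> ->] //]; last by rewrite setUC.
have xy_a : a \in [set x; y] by rewrite -Eab set21.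
have xy_b : b \in [set x; y] by rewrite -Eab set22.
by case/set2P: xy_a xy_b ab => -> /set2P[] ->; rewrite ?eqxx ?orbT.
Qed.

Section CayleyCounting.
Context {Gam : finZmodType}.
Implicit Types (D S T : {set Gam}) (v x y : Gam).

Definition cay_nbhd D v : {set Gam} := [set w | w - v \in D].

Definition cay_edges D S : {set {set Gam}} :=
  [set E : {set Gam} | (E \subset S) &&
      [exists x, exists y, [&& x != y, y - x \in D & E == [set x; y]]]].

Definition arcs D S T : nat :=
  (\sum_(x in S) \sum_(y in T) ((y - x)%R \in D : nat))%N.

Lemma arcsE D S T :
  arcs D S T = #|[set p | [&& p.1 \in S, p.2 \in T & p.2 - p.1 \in D]]|.
Proof.
rewrite /arcs pair_big_dep -sum1dep_card.
rewrite [RHS](eq_bigl (fun p => [&& p.1 \in S & p.2 \in T] && (p.2 - p.1 \in D))).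
  by rewrite [RHS]big_mkcondr; apply: eq_bigr => p _; case: (_ \in D).
by move=> p; rewrite andbA.
Qed.

Lemma arcs_eq0 D S T :
  {in S & T, forall x y, y - x \notin D} -> arcs D S T = 0%N.
Proof.
move=> noD; rewrite /arcs big1 // => x Sx.
by rewrite big1 // => y /(noD x y Sx)/negbTE->.
Qed.

Lemma arcs_setUl D S1 S2 T : [disjoint S1 & S2] ->
  arcs D (S1 :|: S2) T = (arcs D S1 T + arcs D S2 T)%N.
Proof. by move=> S12; rewrite /arcs -bigU //=; apply: eq_bigl => x; rewrite !inE. Qed.

Lemma arcs_setUr D S T1 T2 : [disjoint T1 & T2] ->
  arcs D S (T1 :|: T2) = (arcs D S T1 + arcs D S T2)%N.
Proof.
move=> T12; rewrite /arcs -big_split /=; apply: eq_bigr => x _.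
by rewrite -bigU //=; apply: eq_bigl => y; rewrite !inE.
Qed.

Lemma inv_closedN D : inv_closed D -> forall a, (- a \in D) = (a \in D).
Proof. by move=> DN a; apply/idP/idP => [/DN|/DN//]; rewrite opprK. Qed.

Lemma arcsC D S T : inv_closed D -> arcs D S T = arcs D T S.
Proof.
move=> DN; rewrite /arcs exchange_big /=.
by apply: eq_bigr => y _; apply: eq_bigr => x _; rewrite -(inv_closedN _ DN) opprB.
Qed.

Lemma arcs_setU D S1 S2 : inv_closed D -> [disjoint S1 & S2] ->
  arcs D (S1 :|: S2) (S1 :|: S2) =
  (arcs D S1 S1 + arcs D S2 S2 + (arcs D S1 S2).*2)%N.
Proof.
by move=> DN S12; rewrite arcs_setUl // !arcs_setUr // (arcsC D S2 S1 DN); lia.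
Qed.

Lemma card_cay_edges D S : inv_closed D -> 0 \notin D ->
  ((#|cay_edges D S|).*2 = arcs D S S)%N.
Proof.
move=> DN D0; rewrite arcsE; set P := [set p | _].
have neq x y : y - x \in D -> x != y.
  by apply: contraTneq => ->; rewrite subrr.
pose ends (p : Gam * Gam) := [set p.1; p.2].
have endsP : ends @: P = cay_edges D S.
  apply/setP => E; rewrite inE; apply/imsetP/andP => [[[x y]] | [SE]].
    rewrite inE /= => /and3P[Sx Sy Dyx] ->.
    split; first by apply/subsetP => z /set2P[]->.
    by apply/existsP; exists x; apply/existsP; exists y; rewrite neq //= Dyx eqxx.
  case/existsP => x /existsP[y /and3P[_ Dyx /eqP E_xy]]; exists (x, y) => //.
  by rewrite inE /= Dyx !(subsetP SE) // E_xy ?set21 ?set22.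
rewrite -[#|P|]sum1_card (partition_big_imset ends) endsP.
rewrite -mul2n mulnC -sum_nat_const /=.
apply: eq_bigr => E /setIdP[SE /existsP[x /existsP[y /and3P[xy Dyx /eqP E_xy]]]].
subst E.
have [Sx Sy] : x \in S /\ y \in S by rewrite !(subsetP SE) ?set21 ?set22.
have Dxy : x - y \in D by rewrite -opprB inv_closedN.
rewrite sum1dep_card (_ : [set p | _] = [set (x, y); (y, x)]).
  by rewrite cards2 xpair_eqE negb_and xy.
apply/setP => -[a b]; rewrite !inE /=.
apply/andP/orP => [[/and3P[_ _ /neq ab]] | ].
  by rewrite set2_eq // => /orP.
by case=> /eqP[-> ->]; rewrite Sx Sy ?Dyx ?Dxy set2_eq ?eqxx ?orbT ?neq.
Qed.

Lemma arcs_nbhdE D1 D2 D3 v : arcs D3 (cay_nbhd D1 v) (cay_nbhd D2 v) =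
  #|[set p | [&& p.1 - v \in D1, p.2 - v \in D2 & p.2 - p.1 \in D3]]|.
Proof. by rewrite arcsE; apply: eq_card => p; rewrite !inE. Qed.

(* The involution (x, y) |-> (2v - x, v + y - x) exchanges the jump y - x
   with the offset y - v of the head, and negates the offset of the tail. *)
Lemma arcs_nbhd_swap D1 D2 v : inv_closed D1 ->
  arcs D1 (cay_nbhd D1 v) (cay_nbhd D2 v) =
  arcs D2 (cay_nbhd D1 v) (cay_nbhd D1 v).
Proof.
move=> D1N; rewrite !arcs_nbhdE.
pose f (p : Gam * Gam) := (- (p.1 - v) + v, (p.2 - p.1) + v).
have f1 p : (f p).1 - v = - (p.1 - v) by rewrite addrK.
have f2 p : (f p).2 - v = p.2 - p.1 by rewrite addrK.
have f21 p : (f p).2 - (f p).1 = p.2 - v.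
  by rewrite /= opprD addrACA subrr addr0 opprK subrKA.
have fK : involutive f.
  by move=> [x y]; rewrite /f f1 f21 opprK /= !subrK.
rewrite -(card_imset _ (inv_inj fK)) (can2_imset_pre _ fK fK).
apply: eq_card => p; rewrite !inE f1 f2 f21 inv_closedN //.
by congr andb; apply: andbC.
Qed.

Lemma cay_nbhd_notin D v : 0 \notin D -> v \notin cay_nbhd D v.
Proof. by rewrite inE subrr. Qed.

Lemma disjoint_cay_nbhd D1 D2 v : [disjoint D1 & D2] ->
  [disjoint cay_nbhd D1 v & cay_nbhd D2 v].
Proof.
move=> D12; apply/pred0P => w; rewrite /= !inE.
by case D1w: (w - v \in D1); rewrite // (disjointFr D12 D1w).
Qed.

Lemma arcs_set1l_eq0 D v S :
  [disjoint S & cay_nbhd D v] -> arcs D [set v] S = 0%N.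
Proof.
move=> SN; apply: arcs_eq0 => _ y /set1P-> Sy.
by have := disjointFr SN Sy; rewrite inE => ->.
Qed.

Lemma arcs_setU1_nonadj D v S : inv_closed D -> 0 \notin D ->
  [disjoint S & cay_nbhd D v] -> arcs D (v |: S) (v |: S) = arcs D S S.
Proof.
move=> DN D0 SN; have [Sv | Sv] := boolP (v \in S).
  by have /setUidPr-> : [set v] \subset S by rewrite sub1set.
have vN : [disjoint [set v] & cay_nbhd D v] by rewrite disjoints1 cay_nbhd_notin.
by rewrite arcs_setU ?disjoints1 // !arcs_set1l_eq0 // add0n addn0.
Qed.

Section TwoConnectionSets.
Variables (D1 D2 : {set Gam}) (v : Gam).
Hypotheses (D1N : inv_closed D1) (D2N : inv_closed D2).
Hypotheses (D10 : 0 \notin D1) (D20 : 0 \notin D2) (D12 : [disjoint D1 & D2]).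
Let N1 := cay_nbhd D1 v.
Let N2 := cay_nbhd D2 v.

Let N12 : [disjoint N1 & N2]. Proof. exact: disjoint_cay_nbhd. Qed.
Let N21 : [disjoint N2 & N1]. Proof. by rewrite disjoint_sym. Qed.

Lemma arcs_closed_nbhd_union :
  arcs D1 (v |: (N1 :|: N2)) (v |: (N1 :|: N2)) =
  (arcs D1 (v |: N1) (v |: N1) + arcs D1 (v |: N2) (v |: N2)
   + (arcs D2 (v |: N1) (v |: N1)).*2)%N.
Proof.
have vN2 : v \notin N2 by apply: cay_nbhd_notin.
have vN1N2 : [disjoint v |: N1 & N2].
  by rewrite disjoints_subset subUset sub1set inE vN2 -disjoints_subset.
rewrite /N1 /N2 in vN1N2 *.
rewrite setUA arcs_setU // (arcs_setUl D1 [set v] N1 N2)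
  ?disjoints1 ?cay_nbhd_notin //.
rewrite arcs_set1l_eq0 // arcs_nbhd_swap //.
by rewrite (arcs_setU1_nonadj D1 v N2) ?(arcs_setU1_nonadj D2 v N1).
Qed.

Lemma card_cay_edges_closed_nbhd_union :
  #|cay_edges D1 (v |: (N1 :|: N2))| =
  (#|cay_edges D1 (v |: N1)| + #|cay_edges D1 (v |: N2)|
   + (#|cay_edges D2 (v |: N1)|).*2)%N.
Proof. by have := arcs_closed_nbhd_union; rewrite -!card_cay_edges //; lia. Qed.

Lemma card_cay_edges_nbhd_eq0 : sumset D2 D1 :&: D2 = set0 ->
  #|cay_edges D1 (v |: N2)| = 0%N.
Proof.
move=> sumsetI; apply/eqP; rewrite -double_eq0 card_cay_edges //.
rewrite arcs_setU1_nonadj //; apply/eqP/arcs_eq0 => x y; rewrite !inE => D2x D2y.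
apply: contraFN (in_set0 (y - v)).
rewrite -sumsetI inE D2y andbT -(subrKA x y (- v)) => D1yx.
by apply/imset2P; exists (x - v) (y - x); rewrite // addrC.
Qed.
End TwoConnectionSets.

End CayleyCounting.

Section ColouredCayley.
Context {Gam : finZmodType}.
Implicit Types (D B R S : {set Gam}) (v : Gam).

Lemma ecol_cay (X : cgraph Gam) j D S :
  (forall x y, cadj X x y && (ccol X x y == j) = (y - x \in D)) ->
  ecol X j S = #|cay_edges D S|.
Proof.
move=> XD; apply: eq_card => E; rewrite !inE; congr (_ && _).
by apply: eq_existsb => x; apply: eq_existsb => y; rewrite -XD -andbA.
Qed.

Lemma cay_col_adj D j x y :
  cadj (cay_col D j) x y && (ccol (cay_col D j) x y == j) = (y - x \in D).
Proof. by rewrite eqxx andbT. Qed.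

Lemma cay_union_adj1 B R x y :
  cadj (cay_union B R) x y && (ccol (cay_union B R) x y == 1%N) = (y - x \in B).
Proof. by rewrite /= inE; case: (y - x \in B); rewrite ?andbF. Qed.

Lemma cay_union_adj2 B R x y : [disjoint R & B] ->
  cadj (cay_union B R) x y && (ccol (cay_union B R) x y == 2%N) = (y - x \in R).
Proof.
move=> RB; rewrite /= inE; case Byx: (y - x \in B); last by rewrite andbT.
by rewrite (disjointFl RB Byx).
Qed.

Lemma cnbhd_cay_col D j v : cnbhd (cay_col D j) v = v |: cay_nbhd D v.
Proof. by []. Qed.

Lemma cnbhd_cay_union B R v :
  cnbhd (cay_union B R) v = v |: (cay_nbhd B v :|: cay_nbhd R v).
Proof. by apply/setP => w; rewrite !inE /= inE. Qed.
End ColouredCayley.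

Theorem proposition2p3 (Gam : finZmodType) (R B : {set Gam}) :
  [disjoint R & B] ->
  inv_closed R -> inv_closed B ->
  0 \notin R -> 0 \notin B ->
  let G := cay_col B 1%N in
  let H := cay_col R 2%N in
  let X := cay_union B R in
  forall v : Gam,
    [/\ degc X 1 v = deg G v /\ degc X 2 v = deg H v,
        (ecolv X 1 v)%:Z - (ecolv X 2 v)%:Z =
          ((ecolv G 1 v)%:Z - (ecolv H 2 v)%:Z) +
          ((ecol H 2 (cnbhd G v))%:Z - (ecol G 1 (cnbhd H v))%:Z)
      & (sumset R B :&: R = set0 -> (ecolv H 2 v < ecolv G 1 v)%N ->
         (ecolv X 2 v < ecolv X 1 v)%N)].
Proof.
move=> RB RN BN R0 B0 G H X v.
have BR : [disjoint B & R] by rewrite disjoint_sym.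
have eG S : ecol G 1 S = #|cay_edges B S| by apply/ecol_cay/cay_col_adj.
have eH S : ecol H 2 S = #|cay_edges R S| by apply/ecol_cay/cay_col_adj.
have eX1 S : ecol X 1 S = #|cay_edges B S| by apply/ecol_cay/cay_union_adj1.
have eX2 S : ecol X 2 S = #|cay_edges R S|.
  by apply: ecol_cay => x y; apply: cay_union_adj2.
have e1 := card_cay_edges_closed_nbhd_union B R v BN RN B0 R0 BR.
have e2 := card_cay_edges_closed_nbhd_union R B v RN BN R0 B0 RB.
rewrite [cay_nbhd R v :|: _]setUC in e2.
rewrite /ecolv !cnbhd_cay_col cnbhd_cay_union !eG !eH eX1 eX2 e1 e2.
split.
- by split; apply: eq_card => w; rewrite !inE ?cay_union_adj1 ?cay_union_adj2.
- lia.
- by move=> /(card_cay_edges_nbhd_eq0 B R v BN B0 BR)->; lia.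
Qed.
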